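(* Under Assumptions 1–4 below, the iterates of Algorithm 2Direction satisfy, for every $t\ge0$, with $s_t=\frac{\gamma_{t+1}}{\bar L+\Gamma_{t+1}\mu}$, $$\mathbb E_t\|w^{t+1}-u^{t+1}\|^2\le\Big(1-\frac\alpha2\Big)\|w^t-u^t\|^2+\frac4\alpha s_t^2\|k^t-\nabla f(z^t)\|^2+\frac{2\omega}{n}s_t^2\frac1n\sum_{i=1}^n\|\nabla f_i(z^t)-h_i^t\|^2+s_t^2\Big(\frac{4\omega L_{\max}}{n}+\frac{8L}{\alpha}\Big)D_f(z^t,y^{t+1}),$$ where $D_f(x,y)=f(x)-f(y)-\langle\nabla f(y),x-y\rangle$.
   Context: Setting: $f=\frac1n\sum_{i=1}^nf_i$, $f_i:\mathbb R^d\to\mathbb R$. Assumption 1: each $f_i$ is $L_i$-smooth, $L_{\max}=\max_iL_i$, and $\widehat L>0$ satisfies $\frac1n\sum_i\|\nabla f_i(x)-\nabla f_i(y)\|^2\le\widehat L^2\|x-y\|^2$ for all $x,y$. Assumption 2: $f$ is $L$-smooth. Assumption 3: each $f_i$ is convex and $f$ is $\mu$-strongly convex ($\mu\ge0$) with minimizer $x^*$. Assumption 4: the randomness of all compressors is drawn independently (of each other, of the coins $c^t$, and of the past). Compressor classes: $\mathbb U(\omega)$ ($\omega\ge0$) = stochastic maps $\mathcal C$ with $\mathbb E\mathcal C(x)=x$, $\mathbb E\|\mathcal C(x)-x\|^2\le\omega\|x\|^2$; $\mathbb B(\alpha)$ ($\alpha\in(0,1]$) = possibly stochastic maps with $\mathbb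 E\|\mathcal C(x)-x\|^2\le(1-\alpha)\|x\|^2$. Algorithm 2Direction: compressors $\mathcal C_i^{D,y},\mathcal C_i^{D,z}\in\mathbb U(\omega)$ (workers), $\mathcal C^P\in\mathbb B(\alpha)$ (server); parameters $\bar L>0$, $\mu\ge0$, $p\in(0,1]$, $\Gamma_0\ge1$, $\tau\in(0,1]$, $x^0,h_1^0,\dots,h_n^0,k^0,v^0\in\mathbb R^d$. Set $\beta=1/(\omega+1)$, $w^0=z^0=u^0=x^0$, $h^0=\frac1n\sum_ih_i^0$, $\theta_{\min}=\frac14\min\{1,\alpha/p,\tau/p,\beta/p\}$. For $t=0,1,\dots$: let $\bar\theta_{t+1}$ be the largest root of $p\bar L\Gamma_t\theta^2+p(\bar L+\Gamma_t\mu)\theta-(\bar L+\Gamma_t\mu)=0$, $\theta_{t+1}=\min\{\bar\theta_{t+1},\theta_{\min}\}$, $\gamma_{t+1}=p\theta_{t+1}\Gamma_t/(1-p\theta_{t+1})$, $\Gamma_{t+1}=\Gamma_t+\gamma_{t+1}$; $y^{t+1}=\theta_{t+1}w^t+(1-\theta_{t+1})z^t$; $m_i^{t,y}=\mathcal C_i^{D,y}(\nabla f_i(y^{t+1})-h_i^t)$; $g^{t+1}=h^t+\frac1n\sum_im_i^{t,y}$; $u^{t+1}=\arg\min_x\{\langle g^{t+1},x\rangle+\frac{\bar L+\Gamma_t\mu}{2\gamma_{t+1}}\|x-u^t\|^2+\frac\mu2\|x-y^{t+1}\|^2\}$; $q^{t+1}=\arg\min_x\{\langle k^t,x\rangle+\frac{\bar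 L+\Gamma_t\mu}{2\gamma_{t+1}}\|x-w^t\|^2+\frac\mu2\|x-y^{t+1}\|^2\}$; $w^{t+1}=q^{t+1}+\mathcal C^P(u^{t+1}-q^{t+1})$; $x^{t+1}=\theta_{t+1}u^{t+1}+(1-\theta_{t+1})z^t$; draw $c^t\sim\mathrm{Bernoulli}(p)$, and set $(k^{t+1},z^{t+1})=(v^t,x^{t+1})$ if $c^t=1$, $(k^{t+1},z^{t+1})=(k^t,z^t)$ if $c^t=0$; $m_i^{t,z}=\mathcal C_i^{D,z}(\nabla f_i(z^{t+1})-h_i^t)$; $h_i^{t+1}=h_i^t+\beta m_i^{t,z}$; $v^{t+1}=(1-\tau)v^t+\tau(h^t+\frac1n\sum_im_i^{t,z})$; $h^{t+1}=h^t+\frac\beta n\sum_im_i^{t,z}$. $\mathbb E_t$ denotes conditional expectation given the randomness of the first $t$ iterations. *)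

From mathcomp Require Import all_boot all_order all_algebra.
From mathcomp Require Import all_classical all_reals all_analysis.
Set Implicit Arguments. Unset Strict Implicit. Unset Printing Implicit Defensive.
Import Order.TTheory GRing.Theory Num.Theory.
Local Open Scope ring_scope.

Section Defs.
Variable R : realType.
Variable d : nat.
Notation vec := 'rV[R]_d.

Definition dot (u v : vec) : R := \sum_(j < d) u ord0 j * v ord0 j.
Definition sqn (v : vec) : R := dot v v.
Definition enorm (v : vec) : R := Num.sqrt (sqn v).

Definition bregman (f : vec -> R) (gf : vec -> vec) (x y : vec) : R :=
  f x - f y - dot (gf y) (x - y).

Definition is_argmin (F : vec -> R) (x : vec) : Prop := forall z, F x <= F z.

Definition smooth_grad (L : R) (gf : vec -> vec) : Prop :=
  forall x y, enorm (gf x - gf y) <= L * enorm (x - y).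

Definition is_gradient (f : vec -> R) (gf : vec -> vec) : Prop :=
  forall x, differentiable f x /\ forall h, 'd f x h = dot (gf x) h.

Definition convex_fun (f : vec -> R) : Prop :=
  forall (x y : vec) (a : R), 0 <= a <= 1 ->
    f (a *: x + (1 - a) *: y) <= a * f x + (1 - a) * f y.

Definition strongly_convex_fun (mu : R) (f : vec -> R) : Prop :=
  forall (x y : vec) (a : R), 0 <= a <= 1 ->
    f (a *: x + (1 - a) *: y)
      <= a * f x + (1 - a) * f y - mu / 2 * a * (1 - a) * sqn (x - y).

(* Deterministic step-size sequences of Algorithm 2Direction.
   thetabar G = largest root of  p Lbar G th^2 + p (Lbar + G mu) th - (Lbar + G mu) = 0 *)
Definition thetabar (Lbar mu p G : R) : R :=
  let a := p * Lbar * G in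
  let b := p * (Lbar + G * mu) in
  let c := Lbar + G * mu in
  (- b + Num.sqrt (b ^+ 2 + 4 * a * c)) / (2 * a).

Definition theta_min (p alpha tau beta : R) : R :=
  4^-1 * Num.min 1 (Num.min (alpha / p) (Num.min (tau / p) (beta / p))).

Definition theta_next (Lbar mu p alpha tau omega G : R) : R :=
  Num.min (thetabar Lbar mu p G) (theta_min p alpha tau (1 / (omega + 1))).

Definition gamma_next (Lbar mu p alpha tau omega G : R) : R :=
  let th := theta_next Lbar mu p alpha tau omega G in
  p * th * G / (1 - p * th).

Fixpoint Gam (Lbar mu p alpha tau omega G0 : R) (t : nat) : R :=
  match t with
  | 0 => G0
  | t'.+1 => let G := Gam Lbar mu p alpha tau omega G0 t' in
             G + gamma_next Lbar mu p alpha tau omega G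
  end.

End Defs.

(* Expectation w.r.t. k independent draws from the probability P:
   iterE P k F = \int P(dw_1) ... \int P(dw_k) F [:: w_1; ...; w_k]. *)
Fixpoint iterE (R : realType) (dT : measure_display) (T : measurableType dT)
  (P : probability T R) (k : nat) (F : seq T -> \bar R) : \bar R :=
  match k with
  | 0 => F [::]
  | k'.+1 => (\int[P]_w iterE P k' (fun s => F (w :: s)))%E
  end.

From mathcomp Require Import all_boot all_order all_algebra.
From mathcomp Require Import all_classical all_reals all_analysis.
From mathcomp Require Import ring lra.
Set Implicit Arguments. Unset Strict Implicit. Unset Printing Implicit Defensive.
Import Order.TTheory GRing.Theory Num.Theory.
Local Open Scope ring_scope.

(* By first-order optimality of the two proximal problems, u^{t+1} - q^{t+1} is
   c (u^t - w^t) - s_t (g^{t+1} - k^t) with 0 <= c <= 1, and g^{t+1} - grad f(y^{t+1})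
   is (1/n) times a sum of n independent centered worker compression errors.  The
   server compressor contracts the expected square by 1 - alpha, the independent
   errors only add their variances omega s_t^2 / n^2 |grad f_i(y) - h_i|^2, and
   Young's inequality with weight alpha/2 separates u^t - w^t from the gradient
   error.  Finally |grad f(y) - k|^2 and |grad f_i(y) - h_i|^2 are moved to z by
   co-coercivity of gradients of smooth convex functions, which yields the
   Bregman term D_f(z, y). *)

Section InnerProduct.
Variables (R : realType) (d : nat).
Implicit Types (u v w : 'rV[R]_d) (c e : R).

Lemma dotC u v : dot u v = dot v u.
Proof. by apply: eq_bigr => j _; rewrite mulrC. Qed.

Lemma dotDl u v w : dot (u + v) w = dot u w + dot v w.
Proof. by rewrite /dot -big_split; apply: eq_bigr => j _; rewrite !mxE mulrDl. Qed.

Lemma dotZl c u w : dot (c *: u) w = c * dot u w.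
Proof. by rewrite /dot mulr_sumr; apply: eq_bigr => j _; rewrite !mxE mulrA. Qed.

Lemma dotNl u w : dot (- u) w = - dot u w.
Proof. by rewrite -scaleN1r dotZl mulN1r. Qed.

Lemma dotBl u v w : dot (u - v) w = dot u w - dot v w.
Proof. by rewrite dotDl dotNl. Qed.

Lemma dotDr u v w : dot w (u + v) = dot w u + dot w v.
Proof. by rewrite dotC dotDl !(dotC w). Qed.

Lemma dotZr c u w : dot w (c *: u) = c * dot w u.
Proof. by rewrite dotC dotZl dotC. Qed.

Lemma dotNr u w : dot w (- u) = - dot w u.
Proof. by rewrite dotC dotNl dotC. Qed.

Lemma dot0l w : dot 0 w = 0.
Proof. by rewrite /dot big1 // => j _; rewrite mxE mul0r. Qed.

Lemma dot0r w : dot w 0 = 0.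
Proof. by rewrite dotC dot0l. Qed.

Lemma dot_suml (I : finType) (F : I -> 'rV[R]_d) w :
  dot (\sum_i F i) w = \sum_i dot (F i) w.
Proof.
elim/big_rec2: _ => [|i y1 y2 _ <-]; first by rewrite dot0l.
by rewrite dotDl.
Qed.

Lemma sqn_ge0 v : 0 <= sqn v.
Proof. by apply: sumr_ge0 => j _; rewrite -expr2 sqr_ge0. Qed.

Lemma sqn_le0 v : sqn v <= 0 -> v = 0.
Proof.
move=> v0; have /eqP : sqn v = 0 by apply/eqP; rewrite eq_le v0 sqn_ge0.
rewrite /sqn /dot psumr_eq0 => [/allP v_eq0|j _]; last by rewrite -expr2 sqr_ge0.
apply/rowP => j; rewrite mxE.
by have := v_eq0 j (mem_index_enum j); rewrite /= -expr2 sqrf_eq0 => /eqP.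
Qed.

Lemma sqnD u v : sqn (u + v) = sqn u + 2 * dot u v + sqn v.
Proof. by rewrite /sqn !dotDl !dotDr (dotC v u); ring. Qed.

Lemma sqnB u v : sqn (u - v) = sqn u - 2 * dot u v + sqn v.
Proof. by rewrite sqnD dotNr /sqn dotNl dotNr opprK; ring. Qed.

Lemma sqnZ c u : sqn (c *: u) = c ^+ 2 * sqn u.
Proof. by rewrite /sqn dotZl dotZr mulrA -expr2. Qed.

Lemma sqnN u : sqn (- u) = sqn u.
Proof. by rewrite /sqn dotNl dotNr opprK. Qed.

Lemma sqnBC u v : sqn (u - v) = sqn (v - u).
Proof. by rewrite -sqnN opprB. Qed.

Lemma dot_young e u v : 0 < e -> 2 * dot u v <= e * sqn u + e^-1 * sqn v.
Proof.
move=> e_gt0; have := sqn_ge0 (e *: u - v); rewrite sqnB sqnZ dotZl => sq_ge0.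
have : 0 <= e^-1 * (e ^+ 2 * sqn u - 2 * (e * dot u v) + sqn v).
  by rewrite mulr_ge0 // invr_ge0 ltW.
have -> : e^-1 * (e ^+ 2 * sqn u - 2 * (e * dot u v) + sqn v) =
    (e^-1 * e) * (e * sqn u - 2 * dot u v) + e^-1 * sqn v by ring.
by rewrite mulVf ?gt_eqF // mul1r; lra.
Qed.

Lemma sqnD_young e u v : 0 < e ->
  sqn (u + v) <= (1 + e) * sqn u + (1 + e^-1) * sqn v.
Proof. by move=> e_gt0; have := dot_young u v e_gt0; rewrite sqnD; lra. Qed.

Lemma sqn_le_of_enorm_le c u v : enorm u <= c * enorm v -> sqn u <= c ^+ 2 * sqn v.
Proof.
have sqr_enorm w : enorm w ^+ 2 = sqn w by rewrite sqr_sqrtr // sqn_ge0.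
move=> le_uv; rewrite -!sqr_enorm -exprMn ler_pXn2r // ?nnegrE ?sqrtr_ge0 //.
exact: le_trans (sqrtr_ge0 _) le_uv.
Qed.

Lemma dot_le_of_sqn_le c u v : 0 <= c ->
  sqn u <= c ^+ 2 * sqn v -> dot u v <= c * sqn v.
Proof.
rewrite le_eqVlt => /predU1P[<- | c_gt0] le_uv.
  by move: le_uv; rewrite expr0n /= mul0r => /sqn_le0 ->; rewrite dot0l; lra.
have := @dot_young c^-1 u v; rewrite invr_gt0 invrK => /(_ c_gt0).
have : c^-1 * sqn u <= c^-1 * (c ^+ 2 * sqn v) by rewrite ler_wpM2l // invr_ge0 ltW.
have -> : c^-1 * (c ^+ 2 * sqn v) = (c^-1 * c) * (c * sqn v) by ring.
by rewrite mulVf ?gt_eqF // mul1r; lra.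
Qed.

Lemma sqn_contract_young (al cc st : R) (a b : 'rV[R]_d) :
  0 < al <= 1 -> 0 <= cc <= 1 ->
  (1 - al) * sqn (cc *: a - st *: b) <= (1 - al / 2) * sqn a + 2 / al * st ^+ 2 * sqn b.
Proof.
move=> /andP[al_gt0 al_le1] /andP[cc_ge0 cc_le1].
have := sqnD_young (cc *: a) (- (st *: b)) (divr_gt0 al_gt0 (ltr0Sn _ 1)).
rewrite sqnN !sqnZ invf_div => young.
have coef_a : (1 - al) * ((1 + al / 2) * cc ^+ 2) <= 1 - al / 2.
  have : cc ^+ 2 <= 1 by rewrite expr_le1.
  have : 0 <= (1 - al) * (1 + al / 2) by rewrite mulr_ge0 //; lra.
  nra.
have coef_b : (1 - al) * (1 + 2 / al) <= 2 / al.
  have -> : (1 - al) * (1 + 2 / al) = 2 / al - 1 - al by field; rewrite gt_eqF.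
  lra.
have := ler_wpM2r (sqn_ge0 a) coef_a.
have := ler_wpM2r (mulr_ge0 (sqr_ge0 st) (sqn_ge0 b)) coef_b.
have : 0 <= 1 - al by lra.
move=> /ler_wpM2l/(_ _ _ young); lra.
Qed.

End InnerProduct.

Lemma contraction_rhs_le (R : realType) (al st om nn L Lmax Suw T K DF Sx Sh : R) :
  0 < al -> 0 <= om -> 0 < nn ->
  T <= 2 * K + 4 * L * DF -> Sx <= 2 * Sh + 4 * Lmax * (nn * DF) ->
  (1 - al / 2) * Suw + 2 / al * st ^+ 2 * T + (st / nn) ^+ 2 * om * Sx <=
  (1 - al / 2) * Suw + 4 / al * st ^+ 2 * K + 2 * om / nn * st ^+ 2 * (nn^-1 * Sh)
    + st ^+ 2 * (4 * om * Lmax / nn + 8 * L / al) * DF.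
Proof.
move=> al_gt0 om_ge0 nn_gt0 le_T le_Sx.
have le_T' := ler_wpM2l (mulr_ge0 (divr_ge0 (ler0n _ 2) (ltW al_gt0)) (sqr_ge0 st)) le_T.
have le_Sx' := ler_wpM2l (mulr_ge0 (sqr_ge0 (st / nn)) om_ge0) le_Sx.
apply: le_trans (lerD (lerD (lexx _) le_T') le_Sx') _.
rewrite le_eqVlt; apply/orP; left; apply/eqP.
by field; rewrite !gt_eqF.
Qed.

Lemma ge0_of_ge_neg_linear (R : realType) (c D : R) : 0 <= c ->
  (forall t, 0 < t <= 1 -> - (c * t) <= D) -> 0 <= D.
Proof.
move=> c_ge0 lbD; rewrite leNgt; apply/negP => D_lt0.
have M_gt0 : 0 < c - D by lra.
have t_gt0 : 0 < - D / (c - D) by rewrite divr_gt0 // oppr_gt0.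
have t_le1 : - D / (c - D) <= 1 by rewrite ler_pdivrMr // mul1r; lra.
have tE : - D / (c - D) * (c - D) = - D by rewrite divfK ?gt_eqF.
have := lbD _ (andb_true_intro (conj t_gt0 t_le1)).
move: t_gt0 tE; set t := - D / (c - D); nra.
Qed.

Section SmoothConvex.
Variables (R : realType) (d : nat).
Implicit Types (phi : 'rV[R]_d -> R) (g : 'rV[R]_d -> 'rV[R]_d) (x y z h : 'rV[R]_d).

Definition line_gradient phi g := forall x h (t : R),
  is_derive t 1 (fun s : R => phi (x + s *: h)) (dot (g (x + t *: h)) h).

Lemma is_gradient_line phi g : is_gradient phi g -> line_gradient phi g.
Proof.
move=> grad_g x h t; have [dif dphi] := grad_g (x + t *: h).
have shiftE :
    (fun s : R => s^-1 *: (((fun s0 => phi (x + s0 *: h)) \o shift t) (s *: (1 : R))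
                           - phi (x + t *: h))) =
    (fun s : R => s^-1 *: ((phi \o shift (x + t *: h)) (s *: h) - phi (x + t *: h))).
  apply: funext => s /=; rewrite /shift /= scalerDl.
  by rewrite [X in X *: h](mulr1 s) addrCA.
apply: DeriveDef; first by rewrite /derivable shiftE; exact: diff_derivable.
by rewrite /derive shiftE -/(derive phi _ h) deriveE // dphi.
Qed.

Lemma smooth_descent_ub phi g (K : R) x h : line_gradient phi g ->
  smooth_grad K g -> 0 <= K -> phi (x + h) - phi x - dot (g x) h <= K / 2 * sqn h.
Proof.
move=> line_g smooth_g K_ge0; set c := dot (g x) h; set a := K / 2 * sqn h.
(* By smoothness, [r] has a nonpositive derivative on ]0, 1[. *)
pose r s := phi (x + s *: h) - (s * c + a * s ^+ 2).
have dr (t : R) : is_derive t 1 r (dot (g (x + t *: h)) h - (c + a * (2 * t))).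
  apply: is_deriveB; first exact: line_g.
  by apply: is_derive_eq; rewrite scaler0 add0r /GRing.scale /= !mulr1; ring.
have r'_le0 (t : R) : t \in `]0, 1[ -> derive1 r t <= 0.
  rewrite in_itv /= derive1E; have [_ ->] := dr t; move=> /andP[t_gt0 _].
  have := smooth_g (x + t *: h) x; rewrite addrAC subrr add0r.
  move=> /sqn_le_of_enorm_le; rewrite sqnZ mulrA -exprMn.
  move/(dot_le_of_sqn_le (mulr_ge0 K_ge0 (ltW t_gt0))); rewrite dotBl /a /c.
  have -> : K / 2 * sqn h * (2 * t) = K * t * sqn h by field.
  lra.
have dr_all (t : R) : derivable r t 1 by case: (dr t).
have := @ler0_derive1_le_cc R r 0 1 (fun t _ => dr_all t) r'_le0
  (derivable_within_continuous (fun t _ => dr_all t)) 1 0.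
rewrite !in_itv /= !lexx ler01 => /(_ isT isT isT).
rewrite /r scale1r scale0r addr0 !mul1r mul0r expr1n expr0n /= mulr0 addr0 mulr1.
lra.
Qed.

Lemma smooth_descent_lb phi g (K : R) x h : line_gradient phi g ->
  smooth_grad K g -> 0 <= K -> - (K / 2 * sqn h) <= phi (x + h) - phi x - dot (g x) h.
Proof.
move=> line_g smooth_g K_ge0.
have line_Ng : line_gradient (fun x => - phi x) (fun x => - g x).
  by move=> y k t; rewrite dotNl; exact: is_deriveN.
have smooth_Ng : smooth_grad K (fun x => - g x).
  by move=> a b; rewrite /enorm -opprD sqnN; exact: smooth_g.
have := smooth_descent_ub x h line_Ng smooth_Ng K_ge0; rewrite dotNl; lra.
Qed.

Lemma bregman_ge0 phi g (K : R) z y : convex_fun phi -> line_gradient phi g ->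
  smooth_grad K g -> 0 <= bregman phi g z y.
Proof.
move=> convex_phi line_g smooth_g.
have K'_ge0 : 0 <= Num.max K 0 by rewrite le_max lexx orbT.
have smooth'_g : smooth_grad (Num.max K 0) g.
  move=> a b; apply: le_trans (smooth_g a b) _.
  by rewrite ler_wpM2r ?sqrtr_ge0 // le_max lexx.
(* Convexity on [y, y + t (z - y)] and the quadratic lower bound give
   [bregman >= - O(t)] for every [t] in (0, 1]. *)
apply: (@ge0_of_ge_neg_linear _ (Num.max K 0 / 2 * sqn (z - y))).
  by rewrite !mulr_ge0 ?sqn_ge0.
move=> t /andP[t_gt0 t_le1]; rewrite -(ler_pM2l t_gt0) /bregman.
have := smooth_descent_lb y (t *: (z - y)) line_g smooth'_g K'_ge0.
have -> : y + t *: (z - y) = t *: z + (1 - t) *: y.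
  by rewrite scalerBr scalerBl scale1r addrCA addrA.
have := convex_phi z y t; rewrite (ltW t_gt0) t_le1 sqnZ dotZr => /(_ isT).
nra.
Qed.

Lemma smooth_grad_lt0_eq g (K : R) z y : K < 0 -> smooth_grad K g -> z = y.
Proof.
move=> K_lt0 smooth_g; apply/eqP; rewrite -subr_eq0; apply/eqP/sqn_le0.
have : 0 <= K * enorm (z - y) := le_trans (sqrtr_ge0 _) (smooth_g z y).
rewrite nmulr_rge0 //.
by have := @sqn_le_of_enorm_le _ _ 0 (z - y) (z - y); rewrite !mul0r expr0n /= mul0r.
Qed.

Lemma cocoercive_bregman phi g (K : R) z y : convex_fun phi -> line_gradient phi g ->
  smooth_grad K g -> sqn (g z - g y) <= 2 * K * bregman phi g z y.
Proof.
move=> convex_phi line_g smooth_g.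
case: (ltrgt0P K) => [K_gt0 | K_lt0 | K0].
- (* Descent lemma at [z] in the direction [- (g z - g y) / K], and [bregman_ge0] at [y]. *)
  set V := g z - g y; set S := sqn V; set hv := - (K^-1 *: V).
  have ub := smooth_descent_ub z hv line_g smooth_g (ltW K_gt0).
  have lb := bregman_ge0 (z + hv) y convex_phi line_g smooth_g.
  have dot_hv : dot (g z) hv = dot (g y) hv - K^-1 * S.
    have : dot V hv = - (K^-1 * S) by rewrite /hv dotNr dotZr.
    by rewrite /V dotBl; lra.
  have sqn_hv : K / 2 * sqn hv = K^-1 * S / 2.
    by rewrite /hv sqnN sqnZ -/S; field; rewrite gt_eqF.
  have bregman_hv : bregman phi g (z + hv) y =
      phi (z + hv) - phi y - dot (g y) (z - y) - dot (g y) hv.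
    by rewrite /bregman [z + hv - y]addrAC [in LHS]dotDr; ring.
  have -> : S = 2 * K * (K^-1 * S / 2) by field; rewrite gt_eqF.
  rewrite ler_pM2l ?mulr_gt0 // /bregman; lra.
- rewrite (smooth_grad_lt0_eq z y K_lt0 smooth_g) /bregman !subrr dot0r subrr.
  by rewrite mulr0 /sqn dot0l.
- have := smooth_g z y; rewrite K0 => /sqn_le_of_enorm_le.
  by rewrite expr0n /= mulr0 !mul0r.
Qed.

Lemma sqn_grad_sub_le phi g (K : R) z y v : convex_fun phi -> line_gradient phi g ->
  smooth_grad K g -> sqn (g y - v) <= 2 * sqn (g z - v) + 4 * K * bregman phi g z y.
Proof.
move=> convex_phi line_g smooth_g.
have := sqnD_young (g y - g z) (g z - v) ltr01; rewrite addrA subrK invr1 sqnBC.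
have := cocoercive_bregman z y convex_phi line_g smooth_g; lra.
Qed.

Lemma strongly_convex_convex (mu : R) phi :
  0 <= mu -> strongly_convex_fun mu phi -> convex_fun phi.
Proof.
move=> mu_ge0 sconvex_phi x y a /andP[a_ge0 a_le1].
apply: le_trans (sconvex_phi x y a _) _; first by rewrite a_ge0 a_le1.
have : 0 <= mu / 2 * a * (1 - a) * sqn (x - y).
  by rewrite !mulr_ge0 ?sqn_ge0 ?subr_ge0 ?divr_ge0.
lra.
Qed.

End SmoothConvex.

Section Average.
Variables (R : realType) (d n : nat).
Variables (f : 'I_n -> 'rV[R]_d -> R) (gf : 'I_n -> 'rV[R]_d -> 'rV[R]_d).
Local Notation F := (fun x => n%:R^-1 * \sum_(i < n) f i x).
Local Notation gF := (fun x => n%:R^-1 *: \sum_(i < n) gf i x).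

Lemma line_gradient_avg :
  (forall i, line_gradient (f i) (gf i)) -> line_gradient F gF.
Proof.
move=> line_f x h t.
have := is_deriveZ n%:R^-1
  (@is_derive_sum R R^o R^o n (fun i s => f i (x + s *: h)) t 1 _ (fun i => line_f i x h t)).
have -> : n%:R^-1 \*: (\sum_(i < n) (fun s : R^o => f i (x + s *: h)) : R^o -> R^o) =
    (fun s : R => n%:R^-1 * \sum_(i < n) f i (x + s *: h)).
  by apply: funext => s /=; rewrite fct_sumE.
by rewrite dotZl dot_suml.
Qed.

Lemma bregman_avg z y : (0 < n)%N ->
  \sum_(i < n) bregman (f i) (gf i) z y = n%:R * bregman F gF z y.
Proof.
move=> n_gt0; rewrite /bregman dotZl dot_suml !sumrB.
by field; rewrite pnatr_eq0 -lt0n.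
Qed.

Lemma sum_sqn_grad_sub_le (Li : 'I_n -> R) (Lmax : R) (h : 'I_n -> 'rV[R]_d) z y :
  (0 < n)%N -> (forall i, convex_fun (f i)) -> (forall i, line_gradient (f i) (gf i)) ->
  (forall i, smooth_grad (Li i) (gf i)) -> (forall i, Li i <= Lmax) ->
  \sum_(i < n) sqn (gf i y - h i)
    <= 2 * \sum_(i < n) sqn (gf i z - h i) + 4 * Lmax * (n%:R * bregman F gF z y).
Proof.
move=> n_gt0 convex_f line_f smooth_f le_Lmax.
rewrite -bregman_avg // !mulr_sumr -big_split /=; apply: ler_sum => i _.
apply: le_trans (sqn_grad_sub_le z y (h i) (convex_f i) (line_f i) (smooth_f i)) _.
rewrite lerD2l -!mulrA ler_pM2l // ler_wpM2r //.
exact: bregman_ge0 (convex_f i) (line_f i) (smooth_f i).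
Qed.

Lemma step_error_bound (Li : 'I_n -> R) (Lmax L al om cc st : R) (h : 'I_n -> 'rV[R]_d)
    (u w k y z : 'rV[R]_d) :
  (0 < n)%N -> (forall i, is_gradient (f i) (gf i)) -> (forall i, convex_fun (f i)) ->
  (forall i, smooth_grad (Li i) (gf i)) -> (forall i, Li i <= Lmax) ->
  convex_fun F -> smooth_grad L gF -> 0 < al <= 1 -> 0 <= om -> 0 <= cc <= 1 ->
  (1 - al) * (sqn (cc *: (u - w) - st *: (gF y - k))
              + (st / n%:R) ^+ 2 * om * \sum_(i < n) sqn (gf i y - h i))
  <= (1 - al / 2) * sqn (w - u) + 4 / al * st ^+ 2 * sqn (k - gF z)
     + 2 * om / n%:R * st ^+ 2 * (n%:R^-1 * \sum_(i < n) sqn (gf i z - h i))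
     + st ^+ 2 * (4 * om * Lmax / n%:R + 8 * L / al) * bregman F gF z y.
Proof.
move=> n_gt0 grad_f convex_f smooth_f le_Lmax convexF smoothF al01 om_ge0 cc01.
have line_f i : line_gradient (f i) (gf i) := is_gradient_line (grad_f i).
have grad_k := sqn_grad_sub_le z y k convexF (line_gradient_avg line_f) smoothF.
rewrite [sqn (_ *: \sum_(i < n) gf i z - k)]sqnBC in grad_k.
have grad_h := sum_sqn_grad_sub_le h z y n_gt0 convex_f line_f smooth_f le_Lmax.
have [al_gt0 _] := andP al01; have nR_gt0 : 0 < n%:R :> R by rewrite ltr0n.
apply: le_trans (contraction_rhs_le st (sqn (w - u)) al_gt0 om_ge0 nR_gt0 grad_k grad_h).
have := sqn_contract_young st (u - w) (gF y - k) al01 cc01; rewrite (sqnBC u w).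
have : 0 <= \sum_(i < n) sqn (gf i y - h i) by apply: sumr_ge0 => i _; exact: sqn_ge0.
move=> /(mulr_ge0 (mulr_ge0 (sqr_ge0 (st / n%:R)) om_ge0))/(mulr_ge0 (ltW al_gt0)).
lra.
Qed.

End Average.

Section ProxArgmin.
Variables (R : realType) (d : nat).
Implicit Types (gv a b x : 'rV[R]_d).

Lemma argmin_prox_stationary gv a b x (c1 c2 : R) : 0 < c1 -> 0 <= c2 ->
  is_argmin (fun x => dot gv x + c1 * sqn (x - a) + c2 * sqn (x - b)) x ->
  gv + (2 * c1) *: (x - a) + (2 * c2) *: (x - b) = 0.
Proof.
(* Moving from [x] by [- t *: S], with [S] the gradient at [x] and
   [t = 1 / (2 (c1 + c2))], would lower the objective by [t / 2 * sqn S]. *)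
move=> c1_gt0 c2_ge0 min_x; apply: sqn_le0.
set S := gv + _ + _; set t := (2 * (c1 + c2))^-1; set e := - (t *: S).
have t_gt0 : 0 < t by rewrite invr_gt0; lra.
have := min_x (x + e).
rewrite ![x + e - _]addrAC (sqnD (x - a)) (sqnD (x - b)) dotDr.
have dot_Se : dot S e = dot gv e + 2 * c1 * dot (x - a) e + 2 * c2 * dot (x - b) e.
  by rewrite /S 2!dotDl !dotZl.
have : dot S e = - t * sqn S by rewrite /e dotNr dotZr mulNr.
have : sqn e = t ^+ 2 * sqn S by rewrite /e sqnN sqnZ.
have : - t * sqn S + (c1 + c2) * (t ^+ 2 * sqn S) = - (t / 2) * sqn S.
  by rewrite /t; field; lra.
nra.
Qed.

Lemma argmin_prox_sub g1 g2 a1 a2 b x1 x2 (c1 c2 : R) : 0 < c1 -> 0 <= c2 ->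
  is_argmin (fun x => dot g1 x + c1 * sqn (x - a1) + c2 * sqn (x - b)) x1 ->
  is_argmin (fun x => dot g2 x + c1 * sqn (x - a2) + c2 * sqn (x - b)) x2 ->
  x1 - x2 = (2 * c1 / (2 * c1 + 2 * c2)) *: (a1 - a2) - (2 * c1 + 2 * c2)^-1 *: (g1 - g2).
Proof.
move=> c1_gt0 c2_ge0 /argmin_prox_stationary-/(_ c1_gt0 c2_ge0) opt1.
move=> /argmin_prox_stationary-/(_ c1_gt0 c2_ge0) opt2; apply/rowP => j.
move: opt1 opt2 => /rowP/(_ j) opt1 /rowP/(_ j) opt2; rewrite !mxE in opt1 opt2 *.
set M := 2 * c1 + 2 * c2; have M_neq0 : M != 0 by rewrite gt_eqF // /M; lra.
apply: (mulfI M_neq0).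
have -> : forall A B, M * (2 * c1 / M * A - M^-1 * B) = 2 * c1 * A - B.
  by move=> A B; field.
rewrite /M; lra.
Qed.

Lemma argmin_prox_step_sub (Lbar mu G ga : R) g1 g2 a1 a2 b x1 x2 :
  0 < Lbar -> 0 <= mu -> 0 <= G -> 0 < ga ->
  is_argmin (fun x => dot g1 x + (Lbar + G * mu) / (2 * ga) * sqn (x - a1)
                      + mu / 2 * sqn (x - b)) x1 ->
  is_argmin (fun x => dot g2 x + (Lbar + G * mu) / (2 * ga) * sqn (x - a2)
                      + mu / 2 * sqn (x - b)) x2 ->
  x1 - x2 = ((Lbar + G * mu) / (Lbar + (G + ga) * mu)) *: (a1 - a2)
            - (ga / (Lbar + (G + ga) * mu)) *: (g1 - g2).
Proof.
move=> Lbar_gt0 mu_ge0 G_ge0 ga_gt0 min1 min2.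
have Gmu_ge0 : 0 <= G * mu := mulr_ge0 G_ge0 mu_ge0.
have Gamu_ge0 : 0 <= (G + ga) * mu := mulr_ge0 (addr_ge0 G_ge0 (ltW ga_gt0)) mu_ge0.
have c1_gt0 : 0 < (Lbar + G * mu) / (2 * ga).
  by apply: divr_gt0; [lra | exact: mulr_gt0].
have mu2_ge0 : 0 <= mu / 2 by rewrite divr_ge0.
rewrite (argmin_prox_sub c1_gt0 mu2_ge0 min1 min2).
by congr (_ *: _ - _ *: _); field; rewrite !gt_eqF //; lra.
Qed.

End ProxArgmin.

Section StepSizes.
Variables (R : realType) (Lbar mu p alpha tau omega : R).
Hypotheses (Lbar_gt0 : 0 < Lbar) (mu_ge0 : 0 <= mu) (p_gt0 : 0 < p) (p_le1 : p <= 1).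
Hypotheses (alpha_gt0 : 0 < alpha) (tau_gt0 : 0 < tau) (omega_ge0 : 0 <= omega).

Lemma thetabar_gt0 (G : R) : 0 < G -> 0 < thetabar Lbar mu p G.
Proof.
move=> G_gt0; rewrite /thetabar; set b := p * (Lbar + G * mu).
have c_gt0 : 0 < Lbar + G * mu := ltr_wpDr (mulr_ge0 (ltW G_gt0) mu_ge0) Lbar_gt0.
have b_gt0 : 0 < b by rewrite mulr_gt0.
have ac_gt0 : 0 < 4 * (p * Lbar * G) * (Lbar + G * mu) by rewrite !mulr_gt0.
rewrite divr_gt0 ?mulr_gt0 //.
set D := b ^+ 2 + _; have bD : b ^+ 2 < D by rewrite /D ltrDl.
have := sqrtr_ge0 D; have := sqr_sqrtr (le_trans (sqr_ge0 b) (ltW bD)).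
clearbody D; nra.
Qed.

Lemma theta_min_gt0 : 0 < theta_min p alpha tau (1 / (omega + 1)).
Proof.
by rewrite /theta_min mulr_gt0 ?invr_gt0 // !lt_min ltr01 !divr_gt0 // ltr_wpDl.
Qed.

Lemma theta_min_le4 (beta : R) : theta_min p alpha tau beta <= 4^-1.
Proof. by rewrite /theta_min ler_piMr ?invr_ge0 // ge_min lexx. Qed.

Lemma theta_next_gt0 (G : R) : 0 < G -> 0 < theta_next Lbar mu p alpha tau omega G.
Proof. by move=> G_gt0; rewrite lt_min thetabar_gt0 // theta_min_gt0. Qed.

Lemma theta_next_le4 (G : R) : theta_next Lbar mu p alpha tau omega G <= 4^-1.
Proof. by rewrite ge_min theta_min_le4 orbT. Qed.

Lemma gamma_next_gt0 (G : R) : 0 < G -> 0 < gamma_next Lbar mu p alpha tau omega G.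
Proof.
move=> G_gt0; have th_gt0 := theta_next_gt0 G_gt0.
have := theta_next_le4 G; set th := theta_next _ _ _ _ _ _ _ => th_le.
rewrite /gamma_next -/th divr_gt0 ?mulr_gt0 // subr_gt0.
apply: (@le_lt_trans _ _ th); first by rewrite ger_pMl.
by apply: le_lt_trans th_le _; rewrite invf_lt1 //; lra.
Qed.

Lemma Gam_ge1 (G0 : R) : 1 <= G0 -> forall t, 1 <= Gam Lbar mu p alpha tau omega G0 t.
Proof.
move=> G0_ge1; elim=> [|t IH] //=.
by have := gamma_next_gt0 (lt_le_trans ltr01 IH); lra.
Qed.

End StepSizes.

Section Expectation.
Variables (R : realType) (dT : measure_display) (T : measurableType dT).
Variable P : probability T R.

(* Unlike [ge0_le_integral], no measurability is required: both sides are
   suprema of integrals of simple functions below the integrand. *)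
Lemma ge0_le_integralT (f g : T -> \bar R) :
  (forall x, (0 <= f x)%E) -> (forall x, (f x <= g x)%E) ->
  (\int[P]_x f x <= \int[P]_x g x)%E.
Proof.
move=> f_ge0 le_fg; have g_ge0 x : (0 <= g x)%E := le_trans (f_ge0 x) (le_fg x).
rewrite (ge0_integralTE P f_ge0) (ge0_integralTE P g_ge0).
apply: ereal_sup_le => _ [h le_hf <-]; exists h => //= x.
exact: le_trans (le_hf x) (le_fg x).
Qed.

Lemma integral_prob_cst (c : R) : (\int[P]_w c%:E = c%:E)%E.
Proof. by rewrite (integral_cst P measurableT) /= probability_setT mule1. Qed.

Lemma iterE_ge0 k (F : seq T -> \bar R) :
  (forall s, (0 <= F s)%E) -> (0 <= iterE P k F)%E.
Proof.
elim: k F => [|k IH] F F_ge0 /=; first exact: F_ge0.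
by apply: integral_ge0 => w _; apply: IH.
Qed.

Lemma le_iterE k (F1 F2 : seq T -> \bar R) :
  (forall s, (0 <= F1 s)%E) -> (forall s, (F1 s <= F2 s)%E) ->
  (iterE P k F1 <= iterE P k F2)%E.
Proof.
elim: k F1 F2 => [|k IH] F1 F2 F1_ge0 le_F12 /=; first exact: le_F12.
apply: ge0_le_integralT => w; first exact: iterE_ge0.
exact: IH.
Qed.

Variable d : nat.
Implicit Types (Y : T -> 'rV[R]_d) (v : 'rV[R]_d).

Definition centered_sqn_le Y (b : R) : Prop :=
  [/\ forall j, P.-integrable setT (fun w => (Y w ord0 j)%:E),
      forall j, (\int[P]_w (Y w ord0 j)%:E = 0)%E
    & (\int[P]_w (sqn (Y w))%:E <= b%:E)%E].

Lemma measurable_sqn Y :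
  (forall j, P.-integrable setT (fun w => (Y w ord0 j)%:E)) ->
  measurable_fun setT (fun w => sqn (Y w)).
Proof.
move=> int_Y; apply: measurable_sum => j.
have mY : measurable_fun setT (fun w => Y w ord0 j).
  exact/measurable_realfun.measurable_EFinP/(measurable_int P (int_Y j)).
exact: (measurable_realfun.measurable_funM mY mY).
Qed.

Lemma integral_dot_centered Y v :
  (forall j, P.-integrable setT (fun w => (Y w ord0 j)%:E)) ->
  (forall j, (\int[P]_w (Y w ord0 j)%:E = 0)%E) ->
  P.-integrable setT (fun w => (dot v (Y w))%:E) /\ (\int[P]_w (dot v (Y w))%:E = 0)%E.
Proof.
move=> int_Y mean_Y.
have -> : (fun w => (dot v (Y w))%:E) =
    (fun w => \sum_(j <- index_enum 'I_d) (v ord0 j)%:E * (Y w ord0 j)%:E)%E.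
  by apply: funext => w; rewrite /dot -sumEFin; apply: eq_bigr => j _; rewrite EFinM.
have int_vY j : P.-integrable setT (fun w => ((v ord0 j)%:E * (Y w ord0 j)%:E)%E).
  exact: integrableZl.
split; first by apply: (integrable_sum measurableT) => j _.
rewrite (integral_sum measurableT int_vY).
by apply: big1 => j _; rewrite integralZl // mean_Y mule0.
Qed.

Lemma integral_sqnD_centered Y v (c B b : R) : 0 <= c -> centered_sqn_le Y b ->
  (\int[P]_w (c * (sqn (v + Y w) + B))%:E <= (c * (sqn v + b + B))%:E)%E.
Proof.
move=> c_ge0 [int_Y mean_Y var_Y].
have [int_vY mean_vY] := integral_dot_centered v int_Y mean_Y.
have mY := measurable_sqn int_Y.
have int_cY : (\int[P]_w (c * sqn (Y w))%:E = c%:E * \int[P]_w (sqn (Y w))%:E)%E.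
  under eq_integral do rewrite EFinM.
  apply: ge0_integralZl_EFin => //; last exact/measurable_realfun.measurable_EFinP.
  by move=> w _; rewrite lee_fin sqn_ge0.
have integrable_cY : P.-integrable setT (fun w => (c * sqn (Y w))%:E).
  apply/integrableP; split.
    exact/measurable_realfun.measurable_EFinP/measurable_realfun.measurable_funM.
  under eq_integral do rewrite abse_EFin ger0_norm ?mulr_ge0 ?sqn_ge0 //.
  by rewrite int_cY (le_lt_trans (lee_wpmul2l _ var_Y)) ?lee_fin // -EFinM ltey.
have -> : (fun w => (c * (sqn (v + Y w) + B))%:E) = (fun w =>
    (c * (sqn v + B))%:E + ((2 * c)%:E * (dot v (Y w))%:E + (c * sqn (Y w))%:E))%E.
  by apply: funext => w; rewrite sqnD -EFinM -!EFinD; congr EFin; ring.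
rewrite integralD //; last 2 first.
- exact: finite_measure_integrable_cst.
- exact: integrableD (integrableZl _ _ int_vY) integrable_cY.
rewrite integralD ?integrableZl // integralZl // mean_vY mule0 add0e int_cY.
rewrite integral_prob_cst; apply: le_trans (leeD2l _ (lee_wpmul2l _ var_Y)) _.
  by rewrite lee_fin.
by rewrite -EFinM -EFinD lee_fin; lra.
Qed.

Lemma iterE_sqn_sum_centered (c : R) m (Z : 'I_m -> T -> 'rV[R]_d) (b : 'I_m -> R) v :
  0 <= c -> (forall i, centered_sqn_le (Z i) (b i)) ->
  (iterE P m (fun s => (c * sqn (v + \sum_(i < m) Z i (nth point s i)))%:E)
     <= (c * (sqn v + \sum_(i < m) b i))%:E)%E.
Proof.
move=> c_ge0; elim: m Z b v => [|m IH] Z b v centered_Z /=.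
  by rewrite !big_ord0 !addr0.
rewrite [\sum_(i < m.+1) b i]big_ord_recl addrA.
apply: le_trans (integral_sqnD_centered v _ c_ge0 (centered_Z ord0)).
apply: ge0_le_integralT => w.
  by apply: iterE_ge0 => s; rewrite lee_fin mulr_ge0 ?sqn_ge0.
have := IH (fun i => Z (lift ord0 i)) (fun i => b (lift ord0 i)) (v + Z ord0 w)
  (fun i => centered_Z (lift ord0 i)).
congr (_ <= _)%E; congr iterE; apply: funext => s.
by rewrite big_ord_recl addrA.
Qed.

Lemma centered_scaled_error (X : T -> 'rV[R]_d) v (a om : R) :
  (forall j, P.-integrable setT (fun w => (X w ord0 j)%:E) /\
     (\int[P]_w (X w ord0 j)%:E = (v ord0 j)%:E)%E) ->
  (\int[P]_w (sqn (X w - v))%:E <= (om * sqn v)%:E)%E ->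
  centered_sqn_le (fun w => a *: (X w - v)) (a ^+ 2 * om * sqn v).
Proof.
move=> mean_X var_X.
have coordE j : (fun w => ((a *: (X w - v)) ord0 j)%:E) =
    (fun w => (a%:E * ((X w ord0 j)%:E - (v ord0 j)%:E)))%E.
  by apply: funext => w; rewrite !mxE EFinM EFinB.
have int_Xv j : P.-integrable setT (fun w => ((X w ord0 j)%:E - (v ord0 j)%:E)%E).
  exact: integrableB (mean_X j).1 (finite_measure_integrable_cst _ _ _).
split=> [j | j |].
- by rewrite coordE; exact: integrableZl.
- rewrite coordE integralZl // integralB // ?(mean_X j).1 ?finite_measure_integrable_cst //.
  by rewrite (mean_X j).2 integral_prob_cst subee // mule0.
under eq_integral do rewrite sqnZ EFinM.
rewrite ge0_integralZl_EFin ?sqr_ge0 //; last 2 first.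
- by move=> w _; rewrite lee_fin sqn_ge0.
- apply/measurable_realfun.measurable_EFinP/measurable_sqn => j.
  by have := int_Xv j; congr integrable; apply: funext => w; rewrite !mxE EFinB.
apply: le_trans (lee_wpmul2l _ var_X) _; first by rewrite lee_fin sqr_ge0.
by rewrite -EFinM mulrA.
Qed.

Lemma iterE_sqn_compressed_sum (c a om : R) m (C : 'I_m -> T -> 'rV[R]_d -> 'rV[R]_d)
    (x : 'I_m -> 'rV[R]_d) v : 0 <= c ->
  (forall i x j, P.-integrable setT (fun w => (C i w x ord0 j)%:E) /\
     (\int[P]_w (C i w x ord0 j)%:E = (x ord0 j)%:E)%E) ->
  (forall i x, (\int[P]_w (sqn (C i w x - x))%:E <= (om * sqn x)%:E)%E) ->
  (iterE P m (fun s =>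
      (c * sqn (v + \sum_(i < m) a *: (C i (nth point s i) (x i) - x i)))%:E)
     <= (c * (sqn v + a ^+ 2 * om * \sum_(i < m) sqn (x i)))%:E)%E.
Proof.
move=> c_ge0 mean_C var_C; rewrite mulr_sumr.
exact: iterE_sqn_sum_centered v c_ge0
  (fun i => centered_scaled_error a (mean_C i (x i)) (var_C i (x i))).
Qed.

Lemma integral_sqn_compress_sub (C : T -> 'rV[R]_d -> 'rV[R]_d) (al : R) q v :
  (forall x, (\int[P]_w (sqn (C w x - x))%:E <= ((1 - al) * sqn x)%:E)%E) ->
  (\int[P]_w (sqn (q + C w (v - q) - v))%:E <= ((1 - al) * sqn (v - q))%:E)%E.
Proof.
move=> contract_C.
by under eq_integral do rewrite [q + _]addrC -addrA -[q - v]opprB.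
Qed.

End Expectation.

Unset Implicit Arguments.

Theorem lemma8
  (R : realType) (d n : nat) (hn : (0 < n)%N)
  (* Assumptions 1-3 *)
  (f : 'I_n -> 'rV[R]_d -> R) (gf : 'I_n -> 'rV[R]_d -> 'rV[R]_d)
  (Li : 'I_n -> R) (Lhat L mu : R)
  (Hgrad : forall i, is_gradient (f i) (gf i))
  (HLi : forall i, smooth_grad (Li i) (gf i))
  (HLhat : 0 < Lhat /\
     forall x y, n%:R^-1 * \sum_(i < n) sqn (gf i x - gf i y) <= Lhat ^+ 2 * sqn (x - y))
  (HL : smooth_grad L (fun x => n%:R^-1 *: \sum_(i < n) gf i x))
  (Hconv : forall i, convex_fun (f i))
  (Hmu : 0 <= mu)
  (Hsc : strongly_convex_fun mu (fun x => n%:R^-1 * \sum_(i < n) f i x))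
  (Hmin : exists xs, is_argmin (fun x => n%:R^-1 * \sum_(i < n) f i x) xs)
  (* worker compressors C_i^{D,y} in U(omega): randomness of worker i is the
     i-th of n independent draws from Py *)
  (dy : measure_display) (Ty : measurableType dy) (Py : probability Ty R)
  (Cy : 'I_n -> Ty -> 'rV[R]_d -> 'rV[R]_d) (omega : R) (Homega : 0 <= omega)
  (HCy_unb : forall i x (j : 'I_d),
     Py.-integrable setT (fun w => (Cy i w x ord0 j)%:E) /\
     (\int[Py]_w (Cy i w x ord0 j)%:E = (x ord0 j)%:E)%E)
  (HCy_var : forall i x,
     (\int[Py]_w (sqn (Cy i w x - x))%:E <= (omega * sqn x)%:E)%E)
  (* server compressor C^P in B(alpha), drawn independently from Pp *)
  (dp : measure_display) (Tp : measurableType dp) (Pp : probability Tp R)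
  (Cp : Tp -> 'rV[R]_d -> 'rV[R]_d) (alpha : R) (Halpha : 0 < alpha <= 1)
  (HCp_meas : forall x (j : 'I_d), measurable_fun setT (fun w => Cp w x ord0 j))
  (HCp : forall x,
     (\int[Pp]_w (sqn (Cp w x - x))%:E <= ((1 - alpha) * sqn x)%:E)%E)
  (* algorithm parameters *)
  (Lbar p G0 tau : R) (HLbar : 0 < Lbar) (Hp : 0 < p <= 1) (HG0 : 1 <= G0)
  (Htau : 0 < tau <= 1)
  (* iteration t and the state at iteration t *)
  (t : nat) (w z u k : 'rV[R]_d) (h : 'I_n -> 'rV[R]_d)
  (q : 'rV[R]_d) (u1 : seq Ty -> 'rV[R]_d) :
  let F := fun x => n%:R^-1 * \sum_(i < n) f i x in
  let gF := fun x => n%:R^-1 *: \sum_(i < n) gf i x in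
  let Lmax := \big[Num.max/0]_(i < n) Li i in
  let G := Gam Lbar mu p alpha tau omega G0 t in
  let G1 := Gam Lbar mu p alpha tau omega G0 t.+1 in
  let th := theta_next Lbar mu p alpha tau omega G in
  let ga := gamma_next Lbar mu p alpha tau omega G in
  let st := ga / (Lbar + G1 * mu) in
  let hbar := n%:R^-1 *: \sum_(i < n) h i in
  let y := th *: w + (1 - th) *: z in
  let g := fun s : seq Ty =>
     hbar + n%:R^-1 *: \sum_(i < n) Cy i (nth point s i) (gf i y - h i) in
  (forall s, is_argmin (fun x => dot (g s) x + (Lbar + G * mu) / (2 * ga) * sqn (x - u)
                                 + mu / 2 * sqn (x - y)) (u1 s)) ->
  is_argmin (fun x => dot k x + (Lbar + G * mu) / (2 * ga) * sqn (x - w)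
                      + mu / 2 * sqn (x - y)) q ->
  (iterE Py n (fun s =>
      \int[Pp]_wp (sqn (q + Cp wp (u1 s - q) - u1 s))%:E)
   <= ((1 - alpha / 2) * sqn (w - u)
       + 4 / alpha * st ^+ 2 * sqn (k - gF z)
       + 2 * omega / n%:R * st ^+ 2 * (n%:R^-1 * \sum_(i < n) sqn (gf i z - h i))
       + st ^+ 2 * (4 * omega * Lmax / n%:R + 8 * L / alpha) * bregman F gF z y)%:E)%E.
Proof.
move=> F gF Lmax G G1 th ga st hbar y g min_u1 min_q.
have [al_gt0 al_le1] := andP Halpha; have [p_gt0 p_le1] := andP Hp.
have [tau_gt0 _] := andP Htau; have nR_neq0 : n%:R != 0 :> R by rewrite pnatr_eq0 -lt0n.
have G_gt0 : 0 < G.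
  exact: lt_le_trans ltr01 (Gam_ge1 HLbar Hmu p_gt0 p_le1 al_gt0 tau_gt0 Homega HG0 t).
have ga_gt0 : 0 < ga := gamma_next_gt0 HLbar Hmu p_gt0 p_le1 al_gt0 tau_gt0 Homega G_gt0.
set cc := (Lbar + G * mu) / (Lbar + G1 * mu).
have cc01 : 0 <= cc <= 1.
  have := mulr_ge0 (ltW G_gt0) Hmu; have := mulr_ge0 (ltW ga_gt0) Hmu.
  rewrite /cc /G1 /= -/G -/ga [(G + ga) * mu]mulrDl => gamu_ge0 Gmu_ge0.
  by rewrite divr_ge0 /= ?ler_pdivrMr ?mul1r; try lra.
pose V := cc *: (u - w) - st *: (gF y - k).
pose Z i (wy : Ty) := (- (st / n%:R)) *: (Cy i wy (gf i y - h i) - (gf i y - h i)).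
have u1_sub_q s : u1 s - q = V + \sum_(i < n) Z i (nth point s i).
  rewrite (argmin_prox_step_sub HLbar Hmu (ltW G_gt0) ga_gt0 (min_u1 s) min_q).
  rewrite -[G + ga]/G1 -/cc -/st; apply/rowP => j.
  by rewrite -scaler_sumr /g /hbar /gF /V !sumrB !mxE; field.
have server s : (\int[Pp]_wp (sqn (q + Cp wp (u1 s - q) - u1 s))%:E
    <= ((1 - alpha) * sqn (V + \sum_(i < n) Z i (nth point s i)))%:E)%E.
  by rewrite -u1_sub_q; exact: integral_sqn_compress_sub.
apply: le_trans (le_iterE _ _ _ server) _.
  by move=> s; apply: integral_ge0 => wp _; rewrite lee_fin sqn_ge0.
have al'_ge0 : 0 <= 1 - alpha by lra.
apply: le_trans (iterE_sqn_compressed_sum _ _ V al'_ge0 HCy_unb HCy_var) _.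
rewrite lee_fin sqrrN.
have le_Lmax i : Li i <= Lmax by rewrite /Lmax (bigD1 i) //= le_max lexx.
exact: step_error_bound hn Hgrad Hconv HLi le_Lmax (strongly_convex_convex Hmu Hsc)
  HL Halpha Homega cc01.
Qed.
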